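(* Let $\bm{X}\in\mathbb{R}^{n_1\times r}$, $\bm{Y}\in\mathbb{R}^{n_2\times r}$, and let $\bm{X}_\star,\bm{Y}_\star$ be the ground-truth factors (see context). Suppose there exist a matrix $\bm{P}\in\mathbb{R}^{r\times r}$ with $1/2\le\sigma_r(\bm{P})\le\sigma_1(\bm{P})\le3/2$ and a number $\delta$ such that \[ \max\big\{\|\bm{X}\bm{P}-\bm{X}_\star\|_{\mathrm{F}},\ \|\bm{Y}\bm{P}^{-\top}-\bm{Y}_\star\|_{\mathrm{F}}\big\}\le\delta\le\frac{\sigma_r(\bm{X}_\star)}{80}. \] Then the minimum of $g(\bm{Q})=\|\bm{X}\bm{Q}-\bm{X}_\star\|_{\mathrm{F}}^2+\|\bm{Y}\bm{Q}^{-\top}-\bm{Y}_\star\|_{\mathrm{F}}^2$ over invertible $\bm{Q}\in\mathbb{R}^{r\times r}$ is attained, and a minimizer $\bm{Q}$ (the optimal alignment matrix) satisfies \[ \|\bm{P}-\bm{Q}\|\le\|\bm{P}-\bm{Q}\|_{\mathrm{F}}\le\frac{5\delta}{\sigma_r(\bm{X}_\star)}. \]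
   Context: $\bm{M}_\star\in\mathbb{R}^{n_1\times n_2}$ has rank $r$ and compact SVD $\bm{M}_\star=\bm{U}_\star\bm{\Sigma}_\star\bm{V}_\star^\top$; $\bm{X}_\star=\bm{U}_\star\bm{\Sigma}_\star^{1/2}$, $\bm{Y}_\star=\bm{V}_\star\bm{\Sigma}_\star^{1/2}$. $\sigma_k(\cdot)$ denotes the $k$th largest singular value, $\|\cdot\|$ the spectral norm, and $\bm{P}^{-\top}=(\bm{P}^{-1})^\top$. *)

From HB Require Import structures.
From mathcomp Require Import all_boot all_order all_algebra.
From mathcomp Require Import classical_sets reals.
Set Implicit Arguments. Unset Strict Implicit. Unset Printing Implicit Defensive.
Import Order.TTheory GRing.Theory Num.Theory.
Local Open Scope ring_scope.
Local Open Scope classical_set_scope.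

Section Defs.
Variable R : realType.

Definition vnorm n (x : 'cV[R]_n) : R := Num.sqrt (\sum_i x i 0 ^+ 2).

Definition frob m n (A : 'M[R]_(m, n)) : R :=
  Num.sqrt (\sum_i \sum_j A i j ^+ 2).

(* k-th largest singular value (k >= 1), via the Courant-Fischer min-max
   formula: sup over k-dimensional subspaces (column spaces of full-column-rank
   S : 'M_(n,k)) of the inf of |A x| over unit vectors x in the subspace. *)
Definition sigma m n (k : nat) (A : 'M[R]_(m, n)) : R :=
  sup [set y | exists S : 'M[R]_(n, k), \rank S = k /\
       y = inf [set z | exists c : 'cV[R]_k,
                  vnorm (S *m c) = 1 /\ z = vnorm (A *m (S *m c))]].

Definition specnorm m n (A : 'M[R]_(m, n)) : R := sigma 1 A.

Definition sqrt_diag r (s : 'rV[R]_r) : 'M[R]_r := diag_mx (map_mx Num.sqrt s).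

Definition Xstar n1 r (U : 'M[R]_(n1, r)) (s : 'rV[R]_r) : 'M[R]_(n1, r) :=
  U *m sqrt_diag s.
Definition Ystar n2 r (V : 'M[R]_(n2, r)) (s : 'rV[R]_r) : 'M[R]_(n2, r) :=
  V *m sqrt_diag s.

Definition galign n1 n2 r (X Xs : 'M[R]_(n1, r)) (Y Ys : 'M[R]_(n2, r))
  (Q : 'M[R]_r) : R :=
  frob (X *m Q - Xs) ^+ 2 + frob (Y *m (invmx Q)^T - Ys) ^+ 2.

Definition is_min_align n1 n2 r (X Xs : 'M[R]_(n1, r)) (Y Ys : 'M[R]_(n2, r))
  (Q : 'M[R]_r) : Prop :=
  Q \in unitmx /\ forall Q' : 'M[R]_r, Q' \in unitmx ->
    galign X Xs Y Ys Q <= galign X Xs Y Ys Q'.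

End Defs.

(* Write X (Q - P) = (X P) (P^-1 (Q - P)).  Since
   sigma_r (X P) >= sigma_r (X_star) - delta and sigma_1 P <= 3/2, the X-term
   of g grows linearly in |Q - P|_F: once |Q - P|_F > 5 delta / sigma_r (X_star)
   it exceeds 2 delta^2 >= g P.  On the closed Frobenius ball of that radius
   around P every Q is invertible, because sigma_r Q >= sigma_r P - |Q - P|_F > 0,
   so g is continuous there and attains its minimum by compactness; this minimum
   is global, and every global minimizer lies in the ball. *)

From HB Require Import structures.
From mathcomp Require Import all_boot all_order all_algebra.
From mathcomp Require Import classical_sets reals.
From mathcomp Require Import boolp topology normedtype derive.
From mathcomp Require Import ring lra.
Import Order.TTheory GRing.Theory Num.Theory.
Import numFieldTopology.Exports numFieldNormedType.Exports.
Set Implicit Arguments. Unset Strict Implicit. Unset Printing Implicit Defensive.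
Local Open Scope ring_scope.
Local Open Scope classical_set_scope.

Section Frobenius.
Variable R : realType.
Implicit Types I : finType.

Lemma sumr_sqr_ge0 I (f : I -> R) : 0 <= \sum_i f i ^+ 2.
Proof. by apply: sumr_ge0 => i _; rewrite sqr_ge0. Qed.

Lemma lagrange_identity I (a b : I -> R) :
  \sum_i \sum_j (a i * b j - a j * b i) ^+ 2 =
  2 * ((\sum_i a i ^+ 2) * (\sum_i b i ^+ 2) - (\sum_i a i * b i) ^+ 2).
Proof.
transitivity (\sum_i \sum_j (a i ^+ 2 * b j ^+ 2 + a j ^+ 2 * b i ^+ 2
                             - 2 * (a i * b i * (a j * b j)))).
  by apply: eq_bigr => i _; apply: eq_bigr => j _; ring.
have sum_ab : \sum_i \sum_j a i ^+ 2 * b j ^+ 2 =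
              (\sum_i a i ^+ 2) * (\sum_i b i ^+ 2).
  by rewrite mulr_suml; apply: eq_bigr => i _; rewrite mulr_sumr.
have sum_ba : \sum_i \sum_j a j ^+ 2 * b i ^+ 2 =
              (\sum_i a i ^+ 2) * (\sum_i b i ^+ 2).
  by rewrite exchange_big -sum_ab.
have sum_cross : \sum_i \sum_j 2 * (a i * b i * (a j * b j)) =
                 2 * (\sum_i a i * b i) ^+ 2.
  rewrite expr2 mulr_suml mulr_sumr; apply: eq_bigr => i _.
  by rewrite mulr_sumr -mulr_sumr.
under eq_bigr => i _ do rewrite sumrB big_split /=.
by rewrite sumrB big_split /= sum_ab sum_ba sum_cross; ring.
Qed.

Lemma cauchy_schwarz I (a b : I -> R) :
  (\sum_i a i * b i) ^+ 2 <= (\sum_i a i ^+ 2) * (\sum_i b i ^+ 2).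
Proof.
have : 0 <= \sum_i \sum_j (a i * b j - a j * b i) ^+ 2.
  by apply: sumr_ge0 => i _; exact: sumr_sqr_ge0.
by rewrite lagrange_identity pmulr_rge0 // subr_ge0.
Qed.

Lemma frob_ge0 m n (A : 'M[R]_(m, n)) : 0 <= frob A.
Proof. exact: sqrtr_ge0. Qed.

Lemma frob_sqr m n (A : 'M[R]_(m, n)) : frob A ^+ 2 = \sum_i \sum_j A i j ^+ 2.
Proof. by rewrite sqr_sqrtr //; apply: sumr_ge0 => i _; exact: sumr_sqr_ge0. Qed.

Lemma frob_sqr_pair m n (A : 'M[R]_(m, n)) :
  frob A ^+ 2 = \sum_(k : 'I_m * 'I_n) A k.1 k.2 ^+ 2.
Proof. by rewrite frob_sqr pair_bigA. Qed.

Lemma vnorm_frob n (x : 'cV[R]_n) : vnorm x = frob x.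
Proof.
by rewrite /frob; congr Num.sqrt; apply: eq_bigr => i _; rewrite big_ord1.
Qed.

Lemma frob0 m n : frob (0 : 'M[R]_(m, n)) = 0.
Proof.
rewrite /frob big1 ?sqrtr0 // => i _.
by rewrite big1 // => j _; rewrite mxE expr0n.
Qed.

Lemma frob_eq0 m n (A : 'M[R]_(m, n)) : frob A = 0 -> A = 0.
Proof.
move=> A0; apply/matrixP => i j; rewrite mxE; apply/eqP.
rewrite -sqrf_eq0; apply/eqP.
have /eqP := congr1 (fun x => x ^+ 2) A0; rewrite frob_sqr_pair expr0n /=.
by rewrite psumr_eq0 => [/allP/(_ (i, j) (mem_index_enum _))/eqP|k _];
  rewrite ?sqr_ge0.
Qed.

Lemma frob_gt0 m n (A : 'M[R]_(m, n)) : A != 0 -> 0 < frob A.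
Proof.
move=> nzA; rewrite lt_neqAle frob_ge0 andbT eq_sym.
by apply: contra_neq nzA; exact: frob_eq0.
Qed.

Lemma frobZ m n (c : R) (A : 'M[R]_(m, n)) : frob (c *: A) = `|c| * frob A.
Proof.
rewrite -[`|c|]sqrtr_sqr -sqrtrM ?sqr_ge0 // mulr_sumr; congr Num.sqrt.
apply: eq_bigr => i _; rewrite mulr_sumr.
by apply: eq_bigr => j _; rewrite mxE exprMn.
Qed.

Lemma frobN m n (A : 'M[R]_(m, n)) : frob (- A) = frob A.
Proof. by rewrite -scaleN1r frobZ normrN normr1 mul1r. Qed.

Lemma frob_distC m n (A B : 'M[R]_(m, n)) : frob (A - B) = frob (B - A).
Proof. by rewrite -frobN opprB. Qed.

Lemma frob_dot_le m n (A B : 'M[R]_(m, n)) :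
  \sum_(k : 'I_m * 'I_n) A k.1 k.2 * B k.1 k.2 <= frob A * frob B.
Proof.
apply: le_trans (ler_norm _) _.
rewrite -(ler_pXn2r (n := 2)) ?nnegrE ?mulr_ge0 ?frob_ge0 //.
by rewrite real_normK ?num_real // exprMn !frob_sqr_pair cauchy_schwarz.
Qed.

Lemma frobD m n (A B : 'M[R]_(m, n)) : frob (A + B) <= frob A + frob B.
Proof.
rewrite -(ler_pXn2r (n := 2)) ?nnegrE ?addr_ge0 ?frob_ge0 //.
rewrite sqrrD !frob_sqr_pair.
under eq_bigr => k _ do rewrite mxE sqrrD.
by rewrite !big_split /= lerD2r lerD2l [leRHS]mulr2n lerD ?frob_dot_le.
Qed.

Lemma frob_mulmx_le m n p (A : 'M[R]_(m, n)) (B : 'M[R]_(n, p)) :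
  frob (A *m B) <= frob A * frob B.
Proof.
rewrite -(ler_pXn2r (n := 2)) ?nnegrE ?mulr_ge0 ?frob_ge0 //.
rewrite exprMn !frob_sqr [X in _ * X]exchange_big mulr_suml.
apply: ler_sum => i _; rewrite mulr_sumr; apply: ler_sum => k _.
rewrite mxE /=; exact: (cauchy_schwarz (fun j => A i j) (fun j => B j k)).
Qed.

Lemma frob_sqr_col m n (A : 'M[R]_(m, n)) :
  frob A ^+ 2 = \sum_j frob (col j A) ^+ 2.
Proof.
rewrite frob_sqr exchange_big; apply: eq_bigr => j _.
by rewrite frob_sqr; apply: eq_bigr => i _; rewrite big_ord1 mxE.
Qed.

Lemma frob_sqr_trace m n (A : 'M[R]_(m, n)) : frob A ^+ 2 = \tr (A^T *m A).
Proof.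
rewrite frob_sqr_col; apply: eq_bigr => j _.
rewrite frob_sqr !mxE; apply: eq_bigr => i _.
by rewrite big_ord1 !mxE expr2.
Qed.

Lemma frob_orthomx_mull m n p (U : 'M[R]_(m, n)) (B : 'M[R]_(n, p)) :
  U^T *m U = 1%:M -> frob (U *m B) = frob B.
Proof.
move=> UU; apply/eqP; rewrite -(eqrXn2 (n := 2)) ?frob_ge0 //.
by rewrite !frob_sqr_trace trmx_mul !mulmxA -(mulmxA B^T) UU mulmx1.
Qed.

Lemma mxE_le_frob m n (A : 'M[R]_(m, n)) i j : `|A i j| <= frob A.
Proof.
rewrite -sqrtr_sqr ler_sqrt; last by rewrite -frob_sqr sqr_ge0.
rewrite (bigD1 i) //= (bigD1 j) //= -addrA lerDl addr_ge0 //.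
  by apply: sumr_ge0 => k _; exact: sqr_ge0.
by apply: sumr_ge0 => k _; exact: sumr_sqr_ge0.
Qed.
End Frobenius.

Section SingularValues.
Variable R : realType.
Implicit Types E : set R.

(* In this library [sup] and [inf] of an empty set are [0]; the sets defining
   singular values may be empty, whence the sign conditions below. *)
Lemma sup_ge0 E : has_ubound E -> lbound E 0 -> 0 <= sup E.
Proof.
move=> ubE E_ge0; have [->|/set0P [x Ex]] := eqVneq E set0; first by rewrite sup0.
exact: le_trans (E_ge0 x Ex) (ub_le_sup ubE Ex).
Qed.

Lemma sup_le_ge0 E b : 0 <= b -> ubound E b -> sup E <= b.
Proof.
move=> b_ge0 ubE; have [->|/set0P nE] := eqVneq E set0; first by rewrite sup0.
exact: ge_sup.
Qed.

Lemma inf_ge0 E : lbound E 0 -> 0 <= inf E.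
Proof.
move=> E_ge0; have [->|/set0P nE] := eqVneq E set0; first by rewrite inf0.
exact: lb_le_inf.
Qed.

Lemma inf_le_ge0 E b : 0 <= b -> lbound E 0 -> ubound E b -> inf E <= b.
Proof.
move=> b_ge0 E_ge0 ubE; have [->|/set0P [x Ex]] := eqVneq E set0.
  by rewrite inf0.
exact: le_trans (ge_inf (ex_intro _ 0 E_ge0) Ex) (ubE x Ex).
Qed.

(* [sigma k A] is by definition [sup (minmax_set k A)]. *)
Definition gain_set m n k (A : 'M[R]_(m, n)) (S : 'M[R]_(n, k)) : set R :=
  [set z | exists c : 'cV[R]_k, vnorm (S *m c) = 1 /\ z = vnorm (A *m (S *m c))].

Definition minmax_set m n k (A : 'M[R]_(m, n)) : set R :=
  [set y | exists S : 'M[R]_(n, k), \rank S = k /\ y = inf (gain_set A S)].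

Lemma gain_set_ge0 m n k (A : 'M[R]_(m, n)) (S : 'M[R]_(n, k)) :
  lbound (gain_set A S) 0.
Proof. by move=> _ [c [_ ->]]; rewrite vnorm_frob frob_ge0. Qed.

Lemma gain_set_le_frob m n k (A : 'M[R]_(m, n)) (S : 'M[R]_(n, k)) :
  ubound (gain_set A S) (frob A).
Proof.
move=> _ [c [Sc1 ->]]; rewrite !vnorm_frob in Sc1 *.
by apply: le_trans (frob_mulmx_le _ _) _; rewrite Sc1 mulr1.
Qed.

Lemma minmax_set_ge0 m n k (A : 'M[R]_(m, n)) : lbound (minmax_set k A) 0.
Proof. by move=> _ [S [_ ->]]; apply: inf_ge0; exact: gain_set_ge0. Qed.

Lemma minmax_set_le_frob m n k (A : 'M[R]_(m, n)) :
  ubound (minmax_set k A) (frob A).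
Proof.
move=> _ [S [_ ->]]; apply: inf_le_ge0 (frob_ge0 _) _ _.
  exact: gain_set_ge0.
exact: gain_set_le_frob.
Qed.

Lemma sigma_ge0 m n k (A : 'M[R]_(m, n)) : 0 <= sigma k A.
Proof.
apply: sup_ge0; last exact: minmax_set_ge0.
by exists (frob A); exact: minmax_set_le_frob.
Qed.

Lemma sigma_le_frob m n k (A : 'M[R]_(m, n)) : sigma k A <= frob A.
Proof. by apply: sup_le_ge0 (frob_ge0 _) _; exact: minmax_set_le_frob. Qed.

Lemma frob_normalize n (v : 'cV[R]_n) : v != 0 -> frob ((frob v)^-1 *: v) = 1.
Proof.
move=> nz_v; rewrite frobZ ger0_norm ?invr_ge0 ?frob_ge0 //.
by rewrite mulVf // gt_eqF // frob_gt0.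
Qed.

Lemma frob_mulmx_cV_ge m n (A : 'M[R]_(m, n)) (v : 'cV[R]_n) :
  sigma n A * frob v <= frob (A *m v).
Proof.
have [->|nz_v] := eqVneq v 0; first by rewrite frob0 mulr0 frob_ge0.
have v_gt0 := frob_gt0 nz_v; set u := (frob v)^-1 *: v.
suff : sigma n A <= frob (A *m u).
  rewrite -scalemxAr frobZ ger0_norm ?invr_ge0 ?frob_ge0 //.
  by rewrite -ler_pdivlMr // mulrC.
apply: ge_sup; first by exists (inf (gain_set A 1%:M)), 1%:M; rewrite mxrank1.
move=> _ [S [rkS ->]].
have S_unit : S \in unitmx by rewrite -row_free_unit /row_free rkS.
apply: ge_inf; first by exists 0; exact: gain_set_ge0.
by exists (invmx S *m u); rewrite mulKVmx // !vnorm_frob frob_normalize.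
Qed.

Lemma frob_mulmx_cV_le m n (A : 'M[R]_(m, n)) (w : 'cV[R]_n) :
  frob (A *m w) <= sigma 1 A * frob w.
Proof.
have [->|nz_w] := eqVneq w 0; first by rewrite mulmx0 !frob0 mulr0.
have w_gt0 := frob_gt0 nz_w; rewrite -ler_pdivrMr //.
have gainE z : gain_set A w z -> z = frob (A *m w) / frob w.
  move=> [c [wc1 ->]]; move: wc1; rewrite !vnorm_frob.
  rewrite [c]mx11_scalar mul_mx_scalar -scalemxAr !frobZ => wc1.
  move/(congr1 (fun t => t / frob w)): wc1.
  by rewrite mulfK ?gt_eqF // mul1r => ->; rewrite mulrC.
apply: le_trans (ub_le_sup _ _); last first.
- exists w; split; last by [].
  by apply/eqP; rewrite eqn_leq rank_leq_col lt0n mxrank_eq0.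
- by exists (frob A); exact: minmax_set_le_frob.
apply: lb_le_inf => [|z /gainE -> //].
exists (frob (A *m w) / frob w), ((frob w)^-1)%:M.
rewrite mul_mx_scalar -scalemxAr !vnorm_frob !frobZ.
by rewrite ger0_norm ?invr_ge0 ?frob_ge0 // mulVf ?gt_eqF // mulrC.
Qed.

Lemma frob_mulmx_ge_sigma m n p (A : 'M[R]_(m, n)) (D : 'M[R]_(n, p)) :
  sigma n A * frob D <= frob (A *m D).
Proof.
rewrite -(ler_pXn2r (n := 2)) ?nnegrE ?mulr_ge0 ?sigma_ge0 ?frob_ge0 //.
rewrite exprMn !frob_sqr_col mulr_sumr; apply: ler_sum => j _.
rewrite -exprMn !colE -mulmxA.
by rewrite ler_pXn2r ?nnegrE ?mulr_ge0 ?sigma_ge0 ?frob_ge0 // frob_mulmx_cV_ge.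
Qed.

Lemma frob_mulmx_le_sigma1 m n p (A : 'M[R]_(m, n)) (D : 'M[R]_(n, p)) :
  frob (A *m D) <= sigma 1 A * frob D.
Proof.
rewrite -(ler_pXn2r (n := 2)) ?nnegrE ?mulr_ge0 ?sigma_ge0 ?frob_ge0 //.
rewrite exprMn !frob_sqr_col mulr_sumr; apply: ler_sum => j _.
rewrite -exprMn !colE -mulmxA.
by rewrite ler_pXn2r ?nnegrE ?mulr_ge0 ?sigma_ge0 ?frob_ge0 // frob_mulmx_cV_le.
Qed.

Lemma sigma_ge m n (A : 'M[R]_(m, n)) c : (0 < n)%N ->
  (forall v : 'cV[R]_n, c * frob v <= frob (A *m v)) -> c <= sigma n A.
Proof.
move=> n_gt0 lbA; pose e : 'cV[R]_n := delta_mx (Ordinal n_gt0) 0.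
have nz_e : e != 0.
  apply: contra_neq (@oner_neq0 R) => /matrixP/(_ (Ordinal n_gt0) 0).
  by rewrite !mxE !eqxx.
apply: le_trans (ub_le_sup _ _); last first.
- by exists 1%:M; split; [exact: mxrank1 | reflexivity].
- by exists (frob A); exact: minmax_set_le_frob.
apply: lb_le_inf.
  set u := (frob e)^-1 *: e.
  exists (vnorm (A *m (1%:M *m u))), u.
  by rewrite mul1mx vnorm_frob frob_normalize.
move=> _ [x [x1 ->]]; rewrite !vnorm_frob mul1mx in x1 *.
by rewrite -[c]mulr1 -x1 lbA.
Qed.

Lemma sigma_ge_sub_frob m n (A B : 'M[R]_(m, n)) : (0 < n)%N ->
  sigma n A - frob (A - B) <= sigma n B.
Proof.
move=> n_gt0; apply: sigma_ge => // v.
have AvE : A *m v = B *m v + (A - B) *m v by rewrite mulmxBl addrC subrK.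
have := frob_mulmx_cV_ge A v; rewrite AvE => /le_trans/(_ (frobD _ _)).
have := frob_mulmx_le (A - B) v; rewrite mulrBl; lra.
Qed.

Lemma unitmx_sigma_gt0 n (A : 'M[R]_n) : 0 < sigma n A -> A \in unitmx.
Proof.
move=> sA; apply: contraT; rewrite unitmxE unitfE negbK -det_tr.
move=> /det0P [v nz_v vA].
have AvT : A *m v^T = 0 by apply: trmx_inj; rewrite trmx_mul trmxK vA trmx0.
have nz_vT : v^T != 0.
  by apply: contra_neq nz_v => /(congr1 trmx); rewrite trmxK trmx0.
have := frob_mulmx_cV_ge A v^T; rewrite AvT frob0.
by rewrite lt_geF // mulr_gt0 // frob_gt0.
Qed.

Lemma unitmx_frob_lt_sigma n (P Q : 'M[R]_n) :
  (0 < n)%N -> frob (Q - P) < sigma n P -> Q \in unitmx.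
Proof.
move=> n_gt0 QP_lt; apply: unitmx_sigma_gt0.
by have := sigma_ge_sub_frob P Q n_gt0; rewrite frob_distC; lra.
Qed.
End SingularValues.

Section EntrywiseContinuity.
Variables (R : realType) (T : topologicalType) (x : T).

Lemma continuous_at_sum (I : Type) (r : seq I) (P : pred I) (F : I -> T -> R) :
  (forall i, P i -> {for x, continuous (F i)}) ->
  {for x, continuous (fun y => \sum_(i <- r | P i) F i y)}.
Proof. by move=> cF; apply: cvg_big => //; exact: add_continuous. Qed.

Lemma continuous_at_prod (I : Type) (r : seq I) (P : pred I) (F : I -> T -> R) :
  (forall i, P i -> {for x, continuous (F i)}) ->
  {for x, continuous (fun y => \prod_(i <- r | P i) F i y)}.
Proof. by move=> cF; apply: cvg_big => //; exact: mul_continuous. Qed.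

Lemma eq_continuous_at (f g : T -> R) :
  f =1 g -> {for x, continuous f} -> {for x, continuous g}.
Proof. by move=> /funext ->. Qed.

Definition mx_continuous_at m n (F : T -> 'M[R]_(m, n)) :=
  forall i j, {for x, continuous (fun y => F y i j)}.

Lemma mx_continuous_at_cst m n (A : 'M[R]_(m, n)) : mx_continuous_at (fun=> A).
Proof. by move=> i j; exact: cst_continuous. Qed.

Lemma mx_continuous_atD m n (F G : T -> 'M[R]_(m, n)) :
  mx_continuous_at F -> mx_continuous_at G ->
  mx_continuous_at (fun y => F y + G y).
Proof.
move=> cF cG i j; apply: (@eq_continuous_at (fun y => F y i j + G y i j)).
  by move=> y; rewrite mxE.
exact: continuousD.
Qed.

Lemma mx_continuous_at_mul m n p (F : T -> 'M[R]_(m, n)) (G : T -> 'M[R]_(n, p)) :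
  mx_continuous_at F -> mx_continuous_at G ->
  mx_continuous_at (fun y => F y *m G y).
Proof.
move=> cF cG i j; apply: (@eq_continuous_at (fun y => \sum_k F y i k * G y k j)).
  by move=> y; rewrite mxE.
by apply: continuous_at_sum => k _; exact: continuousM.
Qed.

Lemma mx_continuous_at_tr m n (F : T -> 'M[R]_(m, n)) :
  mx_continuous_at F -> mx_continuous_at (fun y => (F y)^T).
Proof.
move=> cF i j; apply: (@eq_continuous_at (fun y => F y j i)) => // y.
by rewrite mxE.
Qed.

Lemma mx_continuous_atZ m n (f : T -> R) (F : T -> 'M[R]_(m, n)) :
  {for x, continuous f} -> mx_continuous_at F ->
  mx_continuous_at (fun y => f y *: F y).
Proof.
move=> cf cF i j; apply: (@eq_continuous_at (fun y => f y * F y i j)).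
  by move=> y; rewrite mxE.
exact: continuousM.
Qed.

Lemma continuous_at_det n (F : T -> 'M[R]_n) :
  mx_continuous_at F -> {for x, continuous (fun y => \det (F y))}.
Proof.
move=> cF; apply: continuous_at_sum => s _.
apply: continuousM; first exact: cst_continuous.
by apply: continuous_at_prod => i _; exact: cF.
Qed.

Lemma mx_continuous_at_adj n (F : T -> 'M[R]_n) :
  mx_continuous_at F -> mx_continuous_at (fun y => \adj (F y)).
Proof.
case: n F => [F _ [] //|n F cF i j].
apply: (@eq_continuous_at
  (fun y => (-1) ^+ (j + i) * \det (row' j (col' i (F y))))).
  by move=> y; rewrite mxE.
apply: continuousM; first exact: cst_continuous.
apply: continuous_at_det => k l.
by apply: (@eq_continuous_at (fun y => F y (lift j k) (lift i l))) => [y|];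
  rewrite ?mxE.
Qed.

Lemma mx_continuous_at_invmx n (F : T -> 'M[R]_n) :
  mx_continuous_at F -> F x \in unitmx -> mx_continuous_at (fun y => invmx (F y)).
Proof.
move=> cF Fx_unit i j.
have det_Fx : \det (F x) != 0 by rewrite -unitfE -unitmxE.
have near_unit : \forall y \near x, F y \in unitmx.
  apply: filterS (cvgr_neq0 _ (continuous_at_det cF) det_Fx) => y.
  by rewrite unitmxE unitfE.
have := mx_continuous_atZ
  (continuousV (s := fun y => \det (F y)) det_Fx (continuous_at_det cF))
                          (mx_continuous_at_adj cF).
move=> /(_ i j); rewrite /prop_for /continuous_at /= {2}/invmx Fx_unit.
apply: cvg_trans; apply: near_eq_cvg.
by apply: filterS near_unit => y Fy_unit; rewrite /invmx Fy_unit.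
Qed.

Lemma continuous_at_frob_sqr m n (F : T -> 'M[R]_(m, n)) :
  mx_continuous_at F -> {for x, continuous (fun y => frob (F y) ^+ 2)}.
Proof.
move=> cF; apply: (@eq_continuous_at (fun y => \sum_i \sum_j F y i j * F y i j)).
  move=> y; rewrite frob_sqr.
  by apply: eq_bigr => i _; apply: eq_bigr => j _; rewrite expr2.
apply: continuous_at_sum => i _; apply: continuous_at_sum => j _.
exact: continuousM.
Qed.

End EntrywiseContinuity.

Section AlignmentMinimizer.
Variable R : realType.

Lemma mx_continuous_at_vec_mx m n (v : 'rV[R]_(m * n)) :
  mx_continuous_at v (fun w : 'rV[R]_(m * n) => vec_mx w).
Proof.
move=> i j; have := @coord_continuous R 1 (m * n) 0 (mxvec_index i j) v.
by apply: eq_continuous_at => w; rewrite mxE.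
Qed.

Lemma normr_le_frob_vec_mx m n (v : 'rV[R]_(m * n)) : `|v| <= frob (vec_mx v).
Proof.
rewrite [leLHS]/Num.norm /= mx_normrE.
apply/bigmax_leP; split; first exact: frob_ge0.
move=> [i k] _ /=; rewrite (ord1 i); case/mxvec_indexP: k => a b.
have -> : v 0 (mxvec_index a b) = vec_mx v a b by rewrite mxE.
exact: mxE_le_frob.
Qed.

Lemma galign_min_in_ball n1 n2 r (X Xs : 'M[R]_(n1, r)) (Y Ys : 'M[R]_(n2, r))
    (P : 'M[R]_r) (rho : R) :
  0 <= rho -> (forall Q, frob (Q - P) <= rho -> Q \in unitmx) ->
  exists2 Qm, frob (Qm - P) <= rho & forall Q, frob (Q - P) <= rho ->
    galign X Xs Y Ys Qm <= galign X Xs Y Ys Q.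
Proof.
(* Heine-Borel is available for row vectors, so the ball is taken in the
   coordinates given by [mxvec]. *)
move=> rho_ge0 ball_unit.
have in_ballE (Q : 'M[R]_r) :
    (frob (Q - P) ^+ 2 <= rho ^+ 2) = (frob (Q - P) <= rho).
  by rewrite ler_pXn2r // nnegrE frob_ge0.
pose dist2 (v : 'rV[R]_(r * r)) := frob (vec_mx v - P) ^+ 2.
pose ball := dist2 @^-1` [set t | t <= rho ^+ 2].
have ball_unit' v : ball v -> vec_mx v \in unitmx.
  by rewrite /ball /dist2 /= in_ballE; exact: ball_unit.
have ball0 : ball !=set0.
  by exists (mxvec P); rewrite /ball /dist2 /= mxvecK subrr frob0 expr0n sqr_ge0.
have ball_closed : closed ball.
  apply: preimage_closed => [v _|]; last exact: closed_le.
  apply: (continuous_at_frob_sqr (F := fun w => vec_mx w - P)).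
  apply: mx_continuous_atD.
    exact: mx_continuous_at_vec_mx.
  exact: mx_continuous_at_cst.
have ball_bounded : bounded_near id (globally ball).
  rewrite /bounded_near; near=> M => v ball_v /=.
  apply: (@le_trans _ _ (rho + frob P)); last first.
    by near: M; apply: nbhs_pinfty_ge; rewrite realE addr_ge0 ?frob_ge0.
  apply: le_trans (normr_le_frob_vec_mx v) _.
  have := frobD (vec_mx v - P) P; rewrite subrK => /le_trans; apply.
  by rewrite lerD2r -in_ballE.
have ball_compact : compact ball.
  exact: bounded_closed_compact ball_bounded ball_closed.
have galign_cont :
    {within ball, continuous (fun v => galign X Xs Y Ys (vec_mx v))}.
  apply: continuous_in_subspaceT => v; rewrite inE => /ball_unit' v_unit.
  have cvec := mx_continuous_at_vec_mx (v := v).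
  have cinv := mx_continuous_at_tr (mx_continuous_at_invmx cvec v_unit).
  have cX := mx_continuous_atD
    (mx_continuous_at_mul (mx_continuous_at_cst (A := X)) cvec)
    (mx_continuous_at_cst (A := - Xs)).
  have cY := mx_continuous_atD
    (mx_continuous_at_mul (mx_continuous_at_cst (A := Y)) cinv)
    (mx_continuous_at_cst (A := - Ys)).
  exact: continuousD (continuous_at_frob_sqr cX) (continuous_at_frob_sqr cY).
have [c] := compact_EVT_min ball0 ball_compact galign_cont.
rewrite inE /ball /dist2 /= in_ballE => c_in c_min.
exists (vec_mx c) => // Q Q_in; have := c_min (mxvec Q); rewrite mxvecK; apply.
by rewrite inE /ball /dist2 /= mxvecK in_ballE.
Unshelve. all: by end_near.
Qed.
End AlignmentMinimizer.

Section Alignment.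
Variable R : realType.

Lemma sigma_Xstar_ge n1 r (U : 'M[R]_(n1, r)) (s : 'rV[R]_r) (m0 : R) :
  (0 < r)%N -> U^T *m U = 1%:M -> 0 <= m0 -> (forall i, m0 <= s 0 i) ->
  Num.sqrt m0 <= sigma r (Xstar U s).
Proof.
move=> r_gt0 UU m0_ge0 s_ge; apply: sigma_ge => // v.
rewrite /Xstar -mulmxA frob_orthomx_mull //.
rewrite -(ler_pXn2r (n := 2)) ?nnegrE ?mulr_ge0 ?sqrtr_ge0 ?frob_ge0 //.
rewrite exprMn sqr_sqrtr // !frob_sqr mulr_sumr; apply: ler_sum => i _.
rewrite !big_ord1 /sqrt_diag mul_diag_mx !mxE exprMn sqr_sqrtr.
  by rewrite ler_wpM2r ?sqr_ge0.
exact: le_trans (s_ge i).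
Qed.

Lemma sigma_Xstar_gt0 n1 r (U : 'M[R]_(n1, r)) (s : 'rV[R]_r) :
  (0 < r)%N -> U^T *m U = 1%:M -> (forall i, 0 < s 0 i) ->
  (forall i j : 'I_r, (i <= j)%N -> s 0 j <= s 0 i) ->
  0 < sigma r (Xstar U s).
Proof.
move=> r_gt0 UU s_gt0 s_anti; have last_lt : (r.-1 < r)%N by rewrite ltn_predL.
pose i_min := Ordinal last_lt.
have s_ge i : s 0 i_min <= s 0 i by apply: s_anti; rewrite /= -ltnS prednK.
apply: lt_le_trans (sigma_Xstar_ge r_gt0 UU (ltW (s_gt0 i_min)) s_ge).
by rewrite sqrtr_gt0.
Qed.

Lemma frob_mulmx_ge_perturb m r p (X Xs : 'M[R]_(m, r)) (P : 'M[R]_r)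
    (D : 'M[R]_(r, p)) : (0 < r)%N -> P \in unitmx ->
  (sigma r Xs - frob (X *m P - Xs)) * frob D <= sigma 1 P * frob (X *m D).
Proof.
move=> r_gt0 P_unit; set E := invmx P *m D.
have DE : D = P *m E by rewrite mulKVmx.
have D_le : frob D <= sigma 1 P * frob E by rewrite {1}DE frob_mulmx_le_sigma1.
have XD_ge : sigma r (X *m P) * frob E <= frob (X *m D).
  by rewrite DE mulmxA frob_mulmx_ge_sigma.
have sigma_XP : sigma r Xs - frob (X *m P - Xs) <= sigma r (X *m P).
  by rewrite frob_distC; exact: sigma_ge_sub_frob.
apply: le_trans (ler_wpM2r (frob_ge0 D) sigma_XP) _.
apply: le_trans (ler_wpM2l (sigma_ge0 _ _) D_le) _.
by rewrite mulrCA ler_wpM2l ?sigma_ge0.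
Qed.

Lemma galign_lt_far n1 n2 r (X Xs : 'M[R]_(n1, r)) (Y Ys : 'M[R]_(n2, r))
    (P : 'M[R]_r) (d : R) :
  (0 < r)%N -> P \in unitmx -> sigma 1 P <= 3 / 2 ->
  frob (X *m P - Xs) <= d -> frob (Y *m (invmx P)^T - Ys) <= d ->
  0 < sigma r Xs -> d <= sigma r Xs / 80 ->
  forall Q, 5 * d / sigma r Xs < frob (Q - P) ->
  galign X Xs Y Ys P < galign X Xs Y Ys Q.
Proof.
move=> r_gt0 P_unit sP eX eY sXs_gt0 d_small Q far.
have grow := frob_mulmx_ge_perturb X Xs (Q - P) r_gt0 P_unit.
have split_XQ : frob (X *m (Q - P)) <= frob (X *m Q - Xs) + frob (X *m P - Xs).
  rewrite -[frob (X *m P - Xs)]frobN; apply: le_trans (frobD _ _).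
  by rewrite mulmxBr opprB addrA subrK.
have f_ge0 := frob_ge0 (Q - P).
have d_ge0 : 0 <= d := le_trans (frob_ge0 _) eX.
have {}far : 5 * d < sigma r Xs * frob (Q - P) by rewrite -ltr_pdivrMl // mulrC.
have sP_ge0 := sigma_ge0 1 P.
(* (2/3) (79/80) 5 d - d = 55/24 d, and (55/24)^2 > 2. *)
have XQ_far : 55 / 24 * d < frob (X *m Q - Xs) by nra.
have gP_le : galign X Xs Y Ys P <= d ^+ 2 + d ^+ 2.
  by rewrite /galign lerD // ler_pXn2r // nnegrE frob_ge0.
have gQ_ge : frob (X *m Q - Xs) ^+ 2 <= galign X Xs Y Ys Q.
  by rewrite /galign lerDl sqr_ge0.
apply: le_lt_trans gP_le (lt_le_trans _ gQ_ge); nra.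
Qed.
End Alignment.

Theorem lemma1 (R : realType) (n1 n2 r : nat)
  (Mstar : 'M[R]_(n1, n2)) (U : 'M[R]_(n1, r)) (V : 'M[R]_(n2, r))
  (s : 'rV[R]_r)
  (X : 'M[R]_(n1, r)) (Y : 'M[R]_(n2, r)) (P : 'M[R]_r) (delta : R) :
  (0 < r)%N ->
  (* compact SVD of Mstar, rank r *)
  U^T *m U = 1%:M ->
  V^T *m V = 1%:M ->
  (forall i : 'I_r, 0 < s 0 i) ->
  (forall i j : 'I_r, (i <= j)%N -> s 0 j <= s 0 i) ->
  Mstar = U *m diag_mx s *m V^T ->
  \rank Mstar = r ->
  (* hypotheses on P and delta *)
  1 / 2 <= sigma r P ->
  sigma r P <= sigma 1 P ->
  sigma 1 P <= 3 / 2 ->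
  Num.max (frob (X *m P - Xstar U s)) (frob (Y *m (invmx P)^T - Ystar V s))
    <= delta ->
  delta <= sigma r (Xstar U s) / 80 ->
  (exists Q : 'M[R]_r, is_min_align X (Xstar U s) Y (Ystar V s) Q) /\
  (forall Q : 'M[R]_r, is_min_align X (Xstar U s) Y (Ystar V s) Q ->
     specnorm (P - Q) <= frob (P - Q) /\
     frob (P - Q) <= 5 * delta / sigma r (Xstar U s)).
Proof.
(* Of the SVD data only [U^T U = 1] and [s > 0] matter, through
   [sigma r Xs > 0]. *)
move=> r_gt0 UU _ s_gt0 s_anti _ _ sP_ge _ sP1_le.
rewrite ge_max => /andP [eX eY] d_small.
set Xs := Xstar U s; set Ys := Ystar V s; set g := galign X Xs Y Ys.
have sXs_gt0 : 0 < sigma r Xs := sigma_Xstar_gt0 r_gt0 UU s_gt0 s_anti.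
have P_unit : P \in unitmx.
  by apply: unitmx_sigma_gt0; apply: lt_le_trans sP_ge; lra.
set rho := 5 * delta / sigma r Xs.
have rho_ge0 : 0 <= rho.
  by rewrite divr_ge0 ?mulr_ge0 ?(le_trans (frob_ge0 _) eX) ?ltW.
have rho_le : rho <= 1 / 16 by rewrite /rho ler_pdivrMr //; lra.
have ball_unit Q : frob (Q - P) <= rho -> Q \in unitmx.
  by move=> Q_near; apply: unitmx_frob_lt_sigma r_gt0 _; lra.
have far Q : rho < frob (Q - P) -> g P < g Q.
  exact: galign_lt_far r_gt0 P_unit sP1_le eX eY sXs_gt0 d_small Q.
have [Qm Qm_near Qm_min] := galign_min_in_ball X Xs Y Ys rho_ge0 ball_unit.
split.
  exists Qm; split=> [|Q _]; first exact: ball_unit.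
  have [/Qm_min //|/far gP_lt] := leP (frob (Q - P)) rho.
  by apply: le_trans (Qm_min P _) (ltW gP_lt); rewrite subrr frob0.
move=> Q [_ Q_min]; split; first exact: sigma_le_frob.
rewrite frob_distC leNgt; apply/negP => /far.
by rewrite ltNge Q_min.
Qed.
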